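(* There exists a constant $c>0$ such that for all integers $1\le m\le n$ and all integers $z\in[0,l(m,n)]$, \[\mathbb{P}_z\big(L(m,n)\cap U(m,n,z)\big)\ge c\,\frac{z}{\sqrt{n-m+1}}.\]
   Context: $X_1,X_2,\ldots$ are i.i.d. uniform on $\{-1,1\}$; under $\mathbb{P}_z$ the walk is $Z_i=z+\sum_{k=1}^i\prod_{j=1}^kX_j$ (a simple symmetric random walk started at $z$). Define $L(m,n)=\{Z_i>0\ \forall\, 1\le i\le n-m+1\}$, $U(m,n,z)=\{\max_{1\le i\le n-m+1}Z_i\ge 2z\}$, and $l(m,n)=\lfloor\sqrt{n-m+1}/2\rfloor\wedge\lfloor\sqrt{m-1}/2\rfloor$. *)

From HB Require Import structures.
From mathcomp Require Import all_boot all_order all_algebra.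
From mathcomp Require Import Rstruct.
Set Implicit Arguments. Unset Strict Implicit. Unset Printing Implicit Defensive.
Import Order.TTheory GRing.Theory Num.Theory.
Local Open Scope ring_scope.

Definition Xv (N : nat) (x : N.-tuple bool) (j : nat) : int :=
  if nth false x j.-1 then 1 else -1.

Definition Zw (N : nat) (z : int) (x : N.-tuple bool) (i : nat) : int :=
  z + \sum_(1 <= k < i.+1) \prod_(1 <= j < k.+1) Xv x j.

Definition Lev (N : nat) (z : int) (x : N.-tuple bool) : bool :=
  [forall i : 'I_N, 0 < Zw z x i.+1].

Definition Uev (N : nat) (z : int) (x : N.-tuple bool) : bool :=
  [exists i : 'I_N, 2 * z <= Zw z x i.+1].

(* P_z(L(m,n) ∩ U(m,n,z)): the events only depend on X_1..X_{n-m+1},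
   which are i.i.d. uniform on {-1,1}, so the probability is the uniform
   proportion over {-1,1}^(n-m+1). *)
Definition probLU (m n : nat) (z : int) : Rdefinitions.R :=
  (#|[set x : (n - m + 1).-tuple bool | Lev z x && Uev z x]|)%:R
  / (2 ^+ (n - m + 1)).

Definition lmn (m n : nat) : int :=
  Order.min (Num.floor (Num.sqrt ((n - m + 1)%:R : Rdefinitions.R) / 2))
            (Num.floor (Num.sqrt ((m - 1)%:R : Rdefinitions.R) / 2)).

(* The prefix products of X_1, ..., X_N (N = n - m + 1) are again i.i.d. signs, so
   it suffices to count simple walks of N steps, encoded by their sets of up-steps.
   A walk from z whose endpoint is at least 2z either stays positive, and then lies
   in L(m,n) and U(m,n,z), or it touches 0; reflecting the part before the first
   visit of 0 maps the latter injectively to walks ending at 4z or higher. So the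
   positive walks are at least as many as those ending in [2z, 4z), which carry
   about z/2 binomial coefficients C(N, k) with (2k - N)^2 <= 4z^2 <= N, each at
   least half of C(N, ceil(N/2)). Together with 4^N <= 4N C(N, ceil(N/2))^2 this
   gives the probability bound z / (8 sqrt N). *)

From HB Require Import structures.
From mathcomp Require Import all_boot all_order all_algebra.
From mathcomp Require Import Rstruct zify ring lra.
Set Implicit Arguments.
Unset Strict Implicit.
Unset Printing Implicit Defensive.
Import Order.TTheory GRing.Theory Num.Theory.

Lemma bin_odd_central n : n.+1 * 'C(n.*2.+1, n.+1) = n.*2.+1 * 'C(n.*2, n).
Proof. by rewrite -mul_bin_diag. Qed.

Lemma central_binS n : 'C(n.+1.*2, n.+1) = 2 * 'C(n.*2.+1, n.+1).
Proof.
have sym : 'C(n.*2.+1, n) = 'C(n.*2.+1, n.+1).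
  by rewrite -[RHS]bin_sub ?subSS -?addnn ?addnK //; lia.
by rewrite doubleS binS sym mul2n addnn.
Qed.

(* The factor 4n+1 makes the induction close: 4(4n+1)(n+1)^2 = (4n+5)(2n+1)^2 - 1. *)
Lemma exp16_le_central_bin n : 16 ^ n <= (4 * n).+1 * 'C(n.*2, n) ^ 2.
Proof.
elim: n => [//|n IH]; set c := 'C(n.*2, n) in IH.
rewrite central_binS -(leq_pmul2l (_ : 0 < n.+1 ^ 2)) // (expnS 16).
rewrite (_ : _ * (_ * (2 * _) ^ 2) = 4 * (4 * n.+1).+1 * (n.*2.+1 * c) ^ 2); last first.
  by rewrite -bin_odd_central; ring.
have coef : 4 * (4 * n).+1 * n.+1 ^ 2 <= (4 * n.+1).+1 * n.*2.+1 ^ 2 by nia.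
have := leq_mul (leqnn (16 * n.+1 ^ 2)) IH; have := leq_mul coef (leqnn (4 * c ^ 2)).
lia.
Qed.

Lemma exp4_le_bin_uphalf N : 0 < N -> 4 ^ N <= 4 * N * 'C(N, uphalf N) ^ 2.
Proof.
rewrite -(odd_double_half N); set n := N./2.
have := exp16_le_central_bin n; set c := 'C(n.*2, n) => c_ge.
have E16 : 4 ^ n.*2 = 16 ^ n by rewrite -mul2n expnM.
case: (odd N) => /= N_gt0; last first.
  rewrite add0n uphalf_double E16 in N_gt0 *.
  by apply: leq_trans c_ge _; rewrite leq_mul2r -mul2n; lia.
rewrite add1n /= doubleK (expnS 4) E16 -(leq_pmul2l (_ : 0 < n.+1 ^ 2)) //.
rewrite (_ : _ * (_ * _ ^ 2) = 4 * n.*2.+1 * (n.*2.+1 * c) ^ 2); last first.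
  by rewrite -bin_odd_central; ring.
have coef : (4 * n).+1 * n.+1 ^ 2 <= n.*2.+1 ^ 3 by nia.
have := leq_mul (leqnn (4 * n.+1 ^ 2)) c_ge; have := leq_mul coef (leqnn (4 * c ^ 2)).
lia.
Qed.

(* C(N, k) >= C(N, ceil(N/2)) (1 - (2k - N)^2 / (2N + 4)), cleared of denominators. *)
Lemma bin_uphalf_decay N k : uphalf N <= k <= N ->
  'C(N, uphalf N) * (2 * N + 4) <=
  (2 * N + 4) * 'C(N, k) + 'C(N, uphalf N) * (2 * k - N) ^ 2.
Proof.
set h := uphalf N; set K := 2 * N + 4; set C := 'C(N, h).
have N_le_2h : N <= 2 * h by have := uphalfK N; rewrite -/h -mul2n; lia.
case/andP=> /subnKC <-; elim: (k - h) => {k} [|j IH] hjN.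
  by rewrite addn0 mulnC leq_addr.
rewrite addnS in hjN *; have {IH} := IH (ltnW hjN).
set k := h + j; set c := 'C(N, k); set d := 2 * k - N; set m := N - k => IH.
have eN : N = k + m by rewrite /m; lia.
have ek : k = m + d by rewrite /d /m; lia.
have Erec : k.+1 * 'C(N, k.+1) = m * c by exact: mul_bin_left.
have coef : k.+1 * K + m * d ^ 2 + d * d.+1 * d.+2 = m * K + k.+1 * d.+2 ^ 2.
  by rewrite /K eN ek; ring.
rewrite -(leq_pmul2l (ltn0Sn k)) (_ : 2 * k.+1 - N = d.+2); last by rewrite /d; lia.
rewrite mulnDr (mulnCA k.+1 K) Erec.
have := leq_mul (leqnn m) IH; have := congr1 (muln C) coef; lia.
Qed.

Lemma bin_uphalf_le_double_bin N k : uphalf N <= k <= N -> (2 * k - N) ^ 2 <= N ->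
  'C(N, uphalf N) <= 2 * 'C(N, k).
Proof.
move=> hk d_le; have := @bin_uphalf_decay N k hk.
set C := 'C(N, _); set c := 'C(N, k) => decay.
have {}decay : C * (2 * N + 4) <= (2 * N + 4) * c + C * N.
  by apply: leq_trans decay _; rewrite leq_add2l leq_mul2l d_le orbT.
by rewrite -(leq_pmul2l (_ : 0 < 2 * N + 4)) //; lia.
Qed.

Lemma card_sets_card_range (T : finType) k0 r :
  #|[set A : {set T} | k0 <= #|A| < k0 + r]| = \sum_(i < r) 'C(#|T|, k0 + i).
Proof.
elim: r => [|r IH].
  rewrite big_ord0 (_ : [set _ | _] = set0) ?cards0 //.
  by apply/setP => A; rewrite !inE; lia.
rewrite big_ord_recr /= -IH -card_draws.
rewrite -[LHS](cardsID [set A : {set T} | #|A| < k0 + r]).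
by congr (_ + _); apply: eq_card => A; rewrite !inE; lia.
Qed.

Local Open Scope ring_scope.

Section Walk.
Variable N : nat.
Implicit Types b : {set 'I_N}.

Definition upstep b k : bool := k \in [seq val i | i <- enum b].
Definition sgn (c : bool) : int := if c then 1 else -1.
Definition walk b i : int := \sum_(0 <= k < i) sgn (upstep b k).

Lemma upstepE b (i : 'I_N) : upstep b i = (i \in b).
Proof. by rewrite /upstep mem_map ?mem_enum //; exact: val_inj. Qed.

Lemma walk_end b : walk b N = #|b|%:Z * 2 - N%:Z.
Proof.
rewrite /walk big_mkord (eq_bigr (fun i : 'I_N => sgn (i \in b))); last first.
  by move=> i _; rewrite upstepE.
rewrite (bigID (mem b)) /= (eq_bigr (fun _ => 1)); last by move=> i ->.
under [X in _ + X]eq_bigl => i do rewrite -in_setC.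
rewrite [X in _ + X](eq_bigr (fun _ => -1)); last by move=> i; rewrite inE => /negbTE ->.
rewrite !sumr_const mulNrn !natz.
by have /(congr1 Posz) := cardsC b; rewrite card_ord PoszD => <-; ring.
Qed.

(* X_1 = s_0 and X_(k+1) = s_(k-1) s_k for the steps s_k of the walk, so that
   X_1 ... X_(k+1) = s_k. *)
Definition sample_bit b k : bool :=
  if k is k'.+1 then upstep b k == upstep b k' else upstep b 0.
Definition sample b : N.-tuple bool := [tuple of mkseq (sample_bit b) N].

Lemma prod_sample b k : (k < N)%N ->
  \prod_(1 <= j < k.+2) Xv (sample b) j = sgn (upstep b k).
Proof.
elim: k => [|k IH] hk; first by rewrite big_nat1 /Xv /= nth_mkseq.
rewrite big_nat_recr //= IH ?(ltnW hk) // /Xv /= nth_mkseq //=.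
by case: (upstep b k); case: (upstep b k.+1).
Qed.

Lemma Zw_sample z b i : (i <= N)%N -> Zw z (sample b) i = z + walk b i.
Proof.
move=> hi; rewrite /Zw /walk big_add1 /=; congr (_ + _).
by apply: eq_big_nat => k /andP[_ hk]; apply: prod_sample; lia.
Qed.

Lemma sample_inj : injective sample.
Proof.
move=> b1 b2 e; apply/setP => i.
have := prod_sample b1 (ltn_ord i); rewrite e prod_sample // !upstepE.
by case: (i \in b1); case: (i \in b2).
Qed.

End Walk.

Section Reflection.
Variables (N : nat) (z : int).
Implicit Types b : {set 'I_N}.

Definition below b i := z + walk b i <= 0.
Definition hits b := has (below b) (iota 0 N.+1).
Definition hit_time b := find (below b) (iota 0 N.+1).
Definition reflect_before b := [set i : 'I_N | (i < hit_time b)%N (+) (i \in b)].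
Definition stays_positive b := [forall i : 'I_N, 0 < z + walk b i.+1].

Lemma hit_time_le b : hits b -> (hit_time b <= N)%N.
Proof. by rewrite /hits has_find size_iota. Qed.

Lemma below_hit_time b : hits b -> below b (hit_time b).
Proof.
by move=> hb; have := nth_find 0%N hb; rewrite nth_iota ?add0n ?ltnS ?hit_time_le.
Qed.

Lemma above_before_hit_time b i : (i < hit_time b)%N -> 0 < z + walk b i.
Proof.
move=> hi; have iN : (i < N.+1)%N.
  by apply: leq_trans hi _; rewrite -[N.+1](size_iota 0) find_size.
have := before_find 0%N hi.
by rewrite nth_iota // add0n /below => /negbT; rewrite -ltNge.
Qed.

Lemma upstep_reflect b k : (k < N)%N ->
  upstep (reflect_before b) k = (k < hit_time b)%N (+) upstep b k.
Proof. by move=> hk; rewrite -[k]/(val (Ordinal hk)) !upstepE inE. Qed.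

Lemma walk_reflect_before b i : (i <= hit_time b)%N -> (i <= N)%N ->
  walk (reflect_before b) i = - walk b i.
Proof.
move=> it iN; rewrite /walk -sumrN; apply: eq_big_nat => k /andP[_ ki].
by rewrite upstep_reflect ?(leq_trans ki iN) // (leq_trans ki it); case: upstep.
Qed.

Lemma walk_reflect_end b : hits b ->
  walk (reflect_before b) N = walk b N - 2 * walk b (hit_time b).
Proof.
move=> hb; have tN := hit_time_le hb.
rewrite /walk !(big_cat_nat (leq0n (hit_time b)) tN) /=.
have := walk_reflect_before (leqnn _) tN; rewrite /walk => ->.
under [X in - _ + X]eq_big_nat => k /andP[tk kN].
  rewrite upstep_reflect // ltnNge tk /=.
over.
ring.
Qed.

(* The hitting time of b is the first time the reflected walk reaches z. *)
Lemma reflect_before_inj : {in [pred b | hits b] &, injective reflect_before}.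
Proof.
have hit_time_leq b b' : hits b -> reflect_before b = reflect_before b' ->
    (hit_time b' <= hit_time b)%N.
  move=> hb e; rewrite leqNgt; apply/negP => lt_tt'; have tN := hit_time_le hb.
  have := below_hit_time hb; have := above_before_hit_time lt_tt'.
  have := walk_reflect_before (leqnn _) tN.
  by rewrite e walk_reflect_before ?(ltnW lt_tt') // /below; lia.
move=> b1 b2 h1 h2 e.
have et : hit_time b1 = hit_time b2 by apply/eqP; rewrite eqn_leq !hit_time_leq.
by apply/setP => i; move/setP/(_ i): e; rewrite !inE et => /addbI.
Qed.

Lemma card_walk_end_ge_reflection :
  (#|[set b : {set 'I_N} | (z <= walk b N)%R]| <=
   #|[set b : {set 'I_N} | stays_positive b && (z <= walk b N)%R]| +
   #|[set b : {set 'I_N} | (3 * z <= walk b N)%R]|)%N.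
Proof.
set A := [set b : {set 'I_N} | z <= walk b N].
have A_split : A \subset
    [set b : {set 'I_N} | stays_positive b && (z <= walk b N)] :|: [set b in A | hits b].
  apply/subsetP => b; rewrite !inE => zb; rewrite zb andbT /=.
  case hb: (hits b); rewrite ?orbT // orbF.
  apply/forallP => i; move/negbT: hb; rewrite /hits -all_predC => /allP/(_ i.+1).
  by rewrite mem_iota ltnS ltn_ord /= /below -ltNge => ->.
apply: leq_trans (subset_leq_card A_split) _; apply: leq_trans (leq_card_setU _ _) _.
rewrite leq_add2l -(card_in_imset (f := reflect_before)); last first.
  by move=> b1 b2; rewrite !inE => /andP[_ ?] /andP[_ ?]; exact: reflect_before_inj.
apply/subset_leq_card/subsetP => c /imsetP[b]; rewrite !inE => /andP[zb hb] ->.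
by rewrite walk_reflect_end //; have := below_hit_time hb; rewrite /below; lia.
Qed.

Lemma card_walk_end_between : 0 <= z ->
  (#|[set b : {set 'I_N} | (z <= walk b N < 3 * z)%R]| <=
   #|[set b : {set 'I_N} | stays_positive b && (z <= walk b N)%R]|)%N.
Proof.
move=> z_ge0; have := card_walk_end_ge_reflection.
rewrite -(cardsID [set b : {set 'I_N} | 3 * z <= walk b N]) (setIidPr _); last first.
  by apply/subsetP => b; rewrite !inE; lia.
rewrite addnC leq_add2r (_ : _ :\: _ = [set b : {set 'I_N} | z <= walk b N < 3 * z]) //.
by apply/setP => b; rewrite !inE -ltNge andbC.
Qed.

Lemma card_positive_walk_le_LU : (0 < N)%N ->
  (#|[set b : {set 'I_N} | stays_positive b && (z <= walk b N)%R]| <=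
   #|[set x : N.-tuple bool | Lev z x && Uev z x]|)%N.
Proof.
move=> N_gt0; rewrite -(card_imset _ (@sample_inj N)).
apply/subset_leq_card/subsetP => x /imsetP[b]; rewrite inE => /andP[/forallP pos zb] ->.
rewrite inE; apply/andP; split.
  by apply/forallP => i; rewrite Zw_sample.
have lastN : (N.-1 < N)%N by rewrite ltn_predL.
apply/existsP; exists (Ordinal lastN).
by rewrite /= prednK // Zw_sample //; lia.
Qed.

End Reflection.

Lemma card_walk_end_between_ge_bin N (z : nat) : (4 * z ^ 2 <= N)%N ->
  (z * 'C(N, uphalf N) <=
   4 * #|[set b : {set 'I_N} | (z%:Z <= walk b N < 3 * z%:Z)%R]|)%N.
Proof.
move=> zN; have z2N : (2 * z <= N)%N by nia.
set k0 := ((N + z).+1 %/ 2)%N; set r := (z.+1 %/ 2)%N.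
have sizes_sub : [set b : {set 'I_N} | k0 <= #|b| < k0 + r]%N
    \subset [set b : {set 'I_N} | (z%:Z <= walk b N < 3 * z%:Z)%R].
  by apply/subsetP => b; rewrite !inE walk_end /k0 /r; lia.
have bin_ge i : (i < r)%N -> ('C(N, uphalf N) <= 2 * 'C(N, k0 + i))%N.
  move=> ir; apply: bin_uphalf_le_double_bin; first by rewrite uphalfE -divn2 /k0; lia.
  apply: leq_trans _ zN; rewrite (_ : 4 * z ^ 2 = (2 * z) ^ 2)%N; last by ring.
  by rewrite leq_exp2r // /k0; lia.
have sum_ge : (r * 'C(N, uphalf N) <= 2 * \sum_(i < r) 'C(N, k0 + i))%N.
  rewrite -[r in (r * _)%N]card_ord -sum_nat_const big_distrr.
  by apply: leq_sum => i _; exact: bin_ge.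
have := subset_leq_card sizes_sub; rewrite card_sets_card_range card_ord.
have : (z <= 2 * r)%N by rewrite /r; lia.
move: sum_ge; set C := 'C(N, _); set S := \sum_(i < r) _; nia.
Qed.

Lemma card_LU_sqr_ge N (z : nat) : (0 < N)%N -> (4 * z ^ 2 <= N)%N ->
  (z ^ 2 * 4 ^ N <= 64 * N * #|[set x : N.-tuple bool | Lev z x && Uev z x]| ^ 2)%N.
Proof.
move=> N_gt0 zN; set Q := #|_|.
have zCQ : (z * 'C(N, uphalf N) <= 4 * Q)%N.
  apply: leq_trans (card_walk_end_between_ge_bin zN) _; rewrite leq_mul2l /=.
  exact: leq_trans (card_walk_end_between N (le0z_nat z))
                   (card_positive_walk_le_LU z N_gt0).
apply: leq_trans (leq_mul (leqnn (z ^ 2)) (exp4_le_bin_uphalf N_gt0)) _.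
rewrite (_ : z ^ 2 * _ = 4 * N * (z * 'C(N, uphalf N)) ^ 2)%N; last by ring.
rewrite (_ : 64 * N * _ = 4 * N * (4 * Q) ^ 2)%N; last by ring.
by rewrite leq_mul2l leq_exp2r // zCQ orbT.
Qed.

Lemma sqr_le_of_le_floor_half_sqrt (R : archiRcfType) N (z : nat) :
  z%:Z <= Num.floor (Num.sqrt (N%:R : R) / 2) -> (4 * z ^ 2 <= N)%N.
Proof.
rewrite floor_ge_int => zs.
rewrite -(ler_nat R) natrM natrX -[N%:R](@sqr_sqrtr R) ?ler0n //.
have z_ge0 : 0 <= z%:R :> R by exact: ler0n.
have : 2 * z%:R <= Num.sqrt (N%:R : R) by move: zs; rewrite pmulrn; lra.
nra.
Qed.

Lemma ratio_ge_of_sqr_le (R : rcfType) (z Q N : nat) : (0 < N)%N ->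
  (z ^ 2 * 4 ^ N <= 64 * N * Q ^ 2)%N ->
  8^-1 * (z%:R / Num.sqrt N%:R) <= Q%:R / 2 ^+ N :> R.
Proof.
move=> N_gt0; rewrite -(ler_nat R) !natrM !natrX.
have -> : (4 : R) ^+ N = (2 ^+ N) ^+ 2 by rewrite -exprM mulnC exprM expr2 -natrM.
set s := Num.sqrt (N%:R : R); set P := (2 : R) ^+ N => hsq.
have s_gt0 : 0 < s by rewrite sqrtr_gt0 ltr0n.
have P_gt0 : 0 < P by rewrite exprn_gt0.
have key : z%:R * P <= 8 * s * Q%:R.
  rewrite -ler_sqr ?nnegrE ?mulr_ge0 ?ler0n ?(ltW s_gt0) ?(ltW P_gt0) //.
  by rewrite !exprMn sqr_sqrtr ?ler0n //; lra.
rewrite ler_pdivlMr //.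
have -> : 8^-1 * (z%:R / s) * P = (z%:R * P) / (8 * s) by field; rewrite gt_eqF.
by rewrite ler_pdivrMr ?mulr_gt0 // [_ * (8 * s)]mulrC.
Qed.

Theorem lemma20 :
  exists c : Rdefinitions.R, 0 < c /\
    forall (m n : nat) (z : int),
      (1 <= m)%N -> (m <= n)%N -> 0 <= z -> z <= lmn m n ->
      probLU m n z >= c * (z%:~R / Num.sqrt ((n - m + 1)%:R)).
Proof.
exists 8^-1; split; first by rewrite invr_gt0 ltr0n.
move=> m n [] // z _ _ _; rewrite /lmn le_min => /andP[zN _].
have N_gt0 : (0 < n - m + 1)%N by rewrite addn1.
exact: ratio_ge_of_sqr_le N_gt0
  (card_LU_sqr_ge N_gt0 (sqr_le_of_le_floor_half_sqrt zN)).
Qed.
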